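(* Assume a constant budget $\Lambda(t)=\Lambda$, $\Delta^2>0$, $\pi_0<1$ with $\pi_0\ge(1-\pi_0)/|G|$, and hypothesis (U) for the sequence $\bar c$ below. Let $e(\pi_0,G)=\sqrt{|G|\pi_0/(1-\pi_0)}-1$ and $c_{\mathrm{crit}}=\Lambda/(|\Psi(1)|\,e(\pi_0,G))$. If at some stage $t$ the semi-omniscient policy satisfies $\mathbb E[c_i(t)\mid|\Psi(1)|]\le\bar c(t)$ for all $i\in H(\Psi(t-1))$, with $\bar c(t)\ge c_{\mathrm{crit}}$, then $\mathbb E[c_i(t+1)\mid|\Psi(1)|]\le\bar c(t+1)$ for all $i\in H(\Psi(t))$, where $$\bar c(t+1)=\pi_0\,\frac{(\sigma^2/\Delta^2)(\bar c(t)+\Lambda/|\Psi(1)|)}{\sigma^2/\Delta^2+\bar c(t)+\Lambda/|\Psi(1)|}+(1-\pi_0)\,\frac{(\sigma^2/\Delta^2)\bar c(t)}{\sigma^2/\Delta^2+\bar c(t)}.$$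
   Context: Model. There are $Q$ cells. At time $1$ each cell independently contains a target with probability $p_0\in(0,1)$; $\Psi(t)$ is the set of target locations, $|\Psi(1)|\sim\mathrm{Binomial}(Q,p_0)$ constant in time, at most one target per cell. Each cell $j$ has neighbours $G(j)$ with $|G(j)|=|G|$; $H(j)=\{j\}\cup G(j)$, $G(S)=\bigcup_{j\in S}G(j)$, $H(S)=S\cup G(S)$; neighbourhoods of distinct targets are disjoint. Between stages each target independently stays with probability $\pi_0$, else moves to a uniformly chosen neighbour. Amplitudes: initial $\mathcal N(\mu_0,\sigma_0^2)$, random walk with i.i.d. $\mathcal N(0,\Delta^2)$ increments. Observations $y_i(t)=\sqrt{\lambda_i(t)}I_i(t)\theta_i(t)+n_i(t)$, $n_i(t)$ i.i.d. $\mathcal N(0,\sigma^2)$, efforts $\lambda_i(t)\ge0$ with $\sum_i\lambda_i(t)\le\Lambda$. Posterior precisions start at $c_i(1)=\sigma^2/\sigma_0^2$ and evolve by: for each target $n$ at $s^{(n)}(t)$ and each $i\in H(s^{(n)}(t))$, $1/c_i(t+1)=1/(c_{s^{(n)}(t)}(t)+\lambda_{s^{(n)}(t)}(t))+\Delta^2/\sigma^2$. Semi-omniscient policy: at stage $t$ it knows $\Psi(t-1)$, so $p_i(t)=\pi_0$ on $\Psi(t-1)$, $(1-\pi_0)/|G|$ on $G(\Psi(t-1))$, $0$ elsewhere, and allocates $\lambda^s(t)$ minimizing $\sum_ip_i(t)/(c_i(t)+\lambda_i)$ over $\lambda\ge0$, $\sum_i\lambda_i=\Lambda$. Hypothesis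 (U): for the stage $t$ in question, the precisions used to compute the allocation are uniform on $H(\Psi(t-1))$ and equal to the bounding value, $c_i(t)=\bar c(t)$ for $i\in H(\Psi(t-1))$. *)

From HB Require Import structures.
From mathcomp Require Import all_boot all_order all_algebra.
Set Implicit Arguments. Unset Strict Implicit. Unset Printing Implicit Defensive.
Import Order.TTheory GRing.Theory Num.Theory.
Local Open Scope ring_scope.

Section Defs.
Variables (R : rcfType) (T : finType) (Gn : T -> {set T}).

Definition Hset (j : T) : {set T} := j |: Gn j.
Definition GS (S : {set T}) : {set T} := \bigcup_(j in S) Gn j.
Definition HS (S : {set T}) : {set T} := S :|: GS S.

Definition Psi_of (K : nat) (pos : 'I_K -> T) : {set T} := [set pos n | n : 'I_K].

Definition ptarget (pi0 : R) (gsz : nat) (Psi : {set T}) (i : T) : R :=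
  if i \in Psi then pi0
  else if i \in GS Psi then (1 - pi0) / gsz%:R else 0.

Definition objective (p c lam : T -> R) : R := \sum_i p i / (c i + lam i).

Definition trans (pi0 : R) (gsz : nat) (s j : T) : R :=
  if j == s then pi0 else if j \in Gn s then (1 - pi0) / gsz%:R else 0.

(* probability of the move map m : (old cell) -> (new cell), targets at cells of
   Psi moving independently; cells without targets are mapped to themselves *)
Definition moveProb (pi0 : R) (gsz : nat) (Psi : {set T}) (m : {ffun T -> T}) : R :=
  \prod_s (if s \in Psi then trans pi0 gsz s (m s) else (m s == s)%:R).
End Defs.

Definition eG (R : rcfType) (pi0 : R) (gsz : nat) : R :=
  Num.sqrt (gsz%:R * pi0 / (1 - pi0)) - 1.

Definition ccrit (R : rcfType) (Lam : R) (K : nat) (pi0 : R) (gsz : nat) : R :=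
  Lam / (K%:R * eG pi0 gsz).

Definition cbar_next (R : rcfType) (sigma2 Delta2 pi0 Lam : R) (K : nat) (cb : R) : R :=
  pi0 * ((sigma2 / Delta2) * (cb + Lam / K%:R)) / (sigma2 / Delta2 + cb + Lam / K%:R)
  + (1 - pi0) * ((sigma2 / Delta2) * cb) / (sigma2 / Delta2 + cb).

From HB Require Import structures.
From mathcomp Require Import all_boot all_order all_algebra.
From mathcomp Require Import ring lra.
Import Order.TTheory GRing.Theory Num.Theory.
Local Open Scope ring_scope.

(* With A = sigma^2/Delta^2 the precision update reads c' = f(c + lambda) with
   f(x) = A x / (A + x), an increasing concave map.  Once cbar(t) >= c_crit,
   the semi-omniscient policy, faced with uniform precisions, spends Lambda/K
   on every last target position and nothing on the neighbours: the marginal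
   gain pi0 / (cbar + Lambda/K)^2 of a target cell still dominates the gain
   (1-pi0)/(|G| cbar^2) of a neighbour.  Averaging over the independent moves,
   a target stays (probability pi0, precision f(c_s + Lambda/K)) or goes to one
   of its |G| neighbours j (precision f(c_j)); Jensen's inequality for the
   concave f then bounds the expectation by
   pi0 f(cbar + Lambda/K) + (1-pi0) f(cbar) = cbar(t+1). *)

Section RealField.
Context {R : realFieldType}.
Implicit Types A a x y : R.

Definition precision_step A x : R := A * x / (A + x).

Lemma precision_stepE A x y : 0 < A -> 0 < x ->
  y^-1 = x^-1 + A^-1 -> y = precision_step A x.
Proof.
move=> A_gt0 x_gt0 yE.
rewrite -[y]invrK yE /precision_step; field.
by rewrite !gt_eqF ?addr_gt0.
Qed.

Lemma precision_step_le_tangent A a x : 0 < A -> 0 <= a -> 0 <= x ->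
  precision_step A x <= precision_step A a + A ^+ 2 / (A + a) ^+ 2 * (x - a).
Proof.
move=> A_gt0 a_ge0 x_ge0.
have Aa_neq0 : A + a != 0 by rewrite gt_eqF // ltr_wpDr.
have Ax_neq0 : A + x != 0 by rewrite gt_eqF // ltr_wpDr.
rewrite -subr_ge0 /precision_step.
have -> : A * a / (A + a) + A ^+ 2 / (A + a) ^+ 2 * (x - a) - A * x / (A + x)
    = A ^+ 2 * (x - a) ^+ 2 / ((A + a) ^+ 2 * (A + x)).
  by field; rewrite Aa_neq0 Ax_neq0.
apply: divr_ge0; first by rewrite mulr_ge0 ?sqr_ge0.
by rewrite mulr_ge0 ?sqr_ge0 // addr_ge0 // ltW.
Qed.

Lemma expect_precision_step_le (I : finType) (P x : I -> R) A a :
  0 < A -> 0 <= a -> (forall i, 0 <= P i) -> \sum_i P i = 1 ->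
  (forall i, 0 <= x i) -> \sum_i P i * x i <= a ->
  \sum_i P i * precision_step A (x i) <= precision_step A a.
Proof.
move=> A_gt0 a_ge0 P_ge0 P_sum1 x_ge0 mean_le.
set d := A ^+ 2 / (A + a) ^+ 2.
have tangent i : P i * precision_step A (x i)
    <= precision_step A a * P i + d * (P i * x i) - d * a * P i.
  rewrite -subr_ge0.
  have -> : precision_step A a * P i + d * (P i * x i) - d * a * P i
      - P i * precision_step A (x i)
      = P i * (precision_step A a + d * (x i - a) - precision_step A (x i)) by ring.
  by rewrite mulr_ge0 // subr_ge0 precision_step_le_tangent.
apply: le_trans (ler_sum _ (fun i _ => tangent i)) _.
rewrite sumrB big_split /= -!mulr_sumr P_sum1 !mulr1 -addrA -mulrBr gerDl.
by rewrite mulr_ge0_le0 ?subr_le0 // divr_ge0 ?sqr_ge0.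
Qed.

Lemma convexity_gap (p a l m : R) : 0 < a -> 0 <= l -> 0 <= m ->
  p / (a + l) - p / (a + m) + p / (a + m) ^+ 2 * (l - m)
  = p * (l - m) ^+ 2 / ((a + m) ^+ 2 * (a + l)).
Proof.
move=> a_gt0 l_ge0 m_ge0.
have al_neq0 : a + l != 0 by rewrite gt_eqF // ltr_wpDr.
have am_neq0 : a + m != 0 by rewrite gt_eqF // ltr_wpDr.
by field; rewrite al_neq0 am_neq0.
Qed.

Lemma weighted_sum_eq_on_support (I : finType) (w F G : I -> R) :
  (forall i, 0 <= w i) -> (forall i, 0 < w i -> F i = G i) ->
  \sum_i w i * F i = \sum_i w i * G i.
Proof.
move=> w_ge0 FG; apply: eq_bigr => i _.
have [<-|w_neq0] := eqVneq 0 (w i); first by rewrite !mul0r.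
by rewrite FG // lt_def eq_sym w_neq0 w_ge0.
Qed.

End RealField.

Section Allocation.
Context {R : rcfType}.

(* The two gain hypotheses are the KKT conditions for mu, with multiplier nu. *)
Lemma objective_min_unique (T : finType) (p u lam mu : T -> R) (nu : R) :
  (forall i, 0 <= p i) -> (forall i, p i != 0 -> 0 < u i) ->
  (forall i, 0 <= lam i) -> (forall i, 0 <= mu i) ->
  \sum_i lam i = \sum_i mu i ->
  (forall i, p i / (u i + mu i) ^+ 2 <= nu) ->
  (forall i, mu i != 0 -> p i / (u i + mu i) ^+ 2 = nu) ->
  objective p u lam <= objective p u mu ->
  forall i, p i != 0 -> lam i = mu i.
Proof.
move=> p_ge0 u_gt0 lam_ge0 mu_ge0 sum_eq gain_le gain_eq lam_opt.
pose g i := p i / (u i + mu i) ^+ 2.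
pose gap i := p i / (u i + lam i) - p i / (u i + mu i) + g i * (lam i - mu i).
have gapE i : p i != 0 ->
    gap i = p i * (lam i - mu i) ^+ 2 / ((u i + mu i) ^+ 2 * (u i + lam i)).
  by move=> p_neq0; rewrite /gap /g convexity_gap ?u_gt0.
have gap_ge0 i : 0 <= gap i.
  have [p0|p_neq0] := eqVneq (p i) 0; first by rewrite /gap /g p0 !mul0r subrr add0r.
  rewrite gapE //; apply: divr_ge0; first by rewrite mulr_ge0 ?sqr_ge0.
  by rewrite mulr_ge0 ?sqr_ge0 // addr_ge0 // ltW // u_gt0.
have first_order : \sum_i g i * (lam i - mu i) <= 0.
  have gmu i : g i * mu i = nu * mu i.
    by have [->|/gain_eq <-] := eqVneq (mu i) 0; rewrite ?mulr0.
  rewrite (eq_bigr _ (fun i _ => mulrBr _ _ _)) sumrB (eq_bigr _ (fun i _ => gmu i)).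
  rewrite -mulr_sumr -sum_eq mulr_sumr subr_le0.
  by apply: ler_sum => i _; apply: ler_wpM2r; [exact: lam_ge0 | exact: gain_le].
have sum_gap0 : \sum_i gap i = 0.
  apply/eqP; rewrite eq_le sumr_ge0 ?andbT; last by move=> i _.
  rewrite big_split /= sumrB.
  by apply: le_trans (lerD (_ : _ <= 0) first_order) _; rewrite ?addr0 ?subr_le0.
move=> i p_neq0.
have /eqP := @psumr_eq0P _ _ predT gap (fun k _ => gap_ge0 k) sum_gap0 i isT.
have ul_neq0 : u i + lam i != 0 by rewrite gt_eqF // ltr_wpDr // u_gt0.
have um_neq0 : u i + mu i != 0 by rewrite gt_eqF // ltr_wpDr // u_gt0.
rewrite gapE // mulf_eq0 invr_eq0 !mulf_eq0 (negbTE p_neq0).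
by rewrite (negbTE ul_neq0) (negbTE um_neq0) !orbF orbb subr_eq0 => /eqP.
Qed.

(* The threshold c_crit is exactly what makes this hold: L <= cb e(pi0,G) means
   cb + L <= cb sqrt(|G| pi0 / (1 - pi0)). *)
Lemma neighbour_gain_le_target_gain (gsz : nat) (pi0 L cb : R) :
  (0 < gsz)%N -> 0 < pi0 < 1 -> 0 < cb -> 0 <= L -> L <= cb * eG pi0 gsz ->
  (1 - pi0) / gsz%:R / cb ^+ 2 <= pi0 / (cb + L) ^+ 2.
Proof.
move=> gsz_gt0 /andP [pi0_gt0 pi0_lt1] cb_gt0 L_ge0 L_le.
have gsz_gt0R : 0 < (gsz%:R : R) by rewrite ltr0n.
set X := gsz%:R * pi0 / (1 - pi0).
have X_ge0 : 0 <= X by rewrite /X divr_ge0 ?mulr_ge0 ?subr_ge0 ?ltW.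
have qX : (1 - pi0) / gsz%:R * X = pi0.
  by rewrite /X; field; rewrite !gt_eqF ?subr_gt0.
have sq_le : (cb + L) ^+ 2 <= cb ^+ 2 * X.
  rewrite -(sqr_sqrtr X_ge0) -exprMn; apply: lerXn2r; rewrite ?nnegrE.
  - exact: addr_ge0 (ltW cb_gt0) L_ge0.
  - by rewrite mulr_ge0 ?sqrtr_ge0 ?ltW.
  - by move: L_le; rewrite /eG -/X; lra.
have cbL_gt0 : 0 < cb + L by rewrite ltr_wpDr.
rewrite ler_pdivrMr ?exprn_gt0 // mulrAC ler_pdivlMr ?exprn_gt0 //.
have q_ge0 : 0 <= (1 - pi0) / gsz%:R by rewrite divr_ge0 ?subr_ge0 ?ltW.
by apply: le_trans (ler_wpM2l q_ge0 sq_le) _; rewrite mulrCA qX mulrC.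
Qed.

Lemma ptarget_ge0 (T : finType) (Gn : T -> {set T}) (gsz : nat) (pi0 : R)
    (Psi : {set T}) i :
  0 <= pi0 <= 1 -> 0 <= ptarget Gn pi0 gsz Psi i.
Proof.
case/andP=> pi0_ge0 pi0_le1; rewrite /ptarget.
by case: ifP => // _; case: ifP => // _; rewrite divr_ge0 ?subr_ge0.
Qed.

Lemma ptarget_eq0 (T : finType) (Gn : T -> {set T}) (gsz : nat) (pi0 : R)
    (Psi : {set T}) i :
  0 < pi0 -> 0 < (1 - pi0) / gsz%:R ->
  (ptarget Gn pi0 gsz Psi i == 0) = (i \notin HS Gn Psi).
Proof.
move=> pi0_gt0 q_gt0; rewrite /ptarget /HS in_setU.
by case: (i \in Psi); case: (i \in GS Gn Psi); rewrite /= ?eqxx ?gt_eqF.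
Qed.

Lemma semi_omniscient_allocation {T : finType} {Gn : T -> {set T}} {gsz K : nat}
    (Psi : {set T}) (u : T -> R) {lam : T -> R} { pi0 Lam cb : R } :
  (0 < gsz)%N -> (0 < K)%N -> pi0 < 1 -> (1 - pi0) / gsz%:R <= pi0 -> 0 <= Lam ->
  #|Psi| = K -> (forall i, i \in HS Gn Psi -> u i = cb) ->
  (forall i, 0 <= lam i) -> \sum_i lam i = Lam ->
  (forall mu : T -> R, (forall i, 0 <= mu i) -> \sum_i mu i = Lam ->
     objective (ptarget Gn pi0 gsz Psi) u lam
     <= objective (ptarget Gn pi0 gsz Psi) u mu) ->
  0 < eG pi0 gsz -> ccrit Lam K pi0 gsz <= cb ->
  forall i, i \in HS Gn Psi -> lam i = if i \in Psi then Lam / K%:R else 0.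
Proof.
move=> gsz_gt0 K_gt0 pi0_lt1 q_le_pi0 Lam_ge0 cardPsi uE lam_ge0 lam_sum lam_opt
  eG_gt0 crit_le_cb.
set p := ptarget Gn pi0 gsz Psi in lam_opt *.
set L := Lam / K%:R.
have K_gt0R : 0 < (K%:R : R) by rewrite ltr0n.
have q_gt0 : 0 < (1 - pi0) / gsz%:R by rewrite divr_gt0 ?ltr0n ?subr_gt0.
have pi0_gt0 : 0 < pi0 := lt_le_trans q_gt0 q_le_pi0.
have [Lam0|Lam_neq0] := eqVneq Lam 0.
  move=> i _; rewrite /L Lam0 mul0r if_same.
  by apply: (@psumr_eq0P _ _ predT lam (fun k _ => lam_ge0 k)); rewrite ?lam_sum.
have Lam_gt0 : 0 < Lam by rewrite lt_def Lam_neq0.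
have cb_gt0 : 0 < cb.
  by apply: lt_le_trans crit_le_cb; rewrite /ccrit divr_gt0 ?mulr_gt0.
have L_ge0 : 0 <= L by rewrite divr_ge0 ?ltW.
have L_le : L <= cb * eG pi0 gsz.
  have -> : L = ccrit Lam K pi0 gsz * eG pi0 gsz.
    by rewrite /L /ccrit; field; rewrite !gt_eqF.
  by rewrite ler_pM2r.
have p_neq0 i : (p i != 0) = (i \in HS Gn Psi).
  by rewrite ptarget_eq0 ?negbK.
pose mu i := if i \in Psi then L else 0.
have mu_ge0 i : 0 <= mu i by rewrite /mu; case: ifP.
have mu_sum : \sum_i mu i = Lam.
  rewrite /mu -big_mkcond /= sumr_const cardPsi -mulr_natr /L.
  by field; rewrite gt_eqF.
have inHS i : i \in Psi -> i \in HS Gn Psi by move=> iP; rewrite /HS in_setU iP.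
move=> i; rewrite -p_neq0.
apply: (@objective_min_unique _ p u lam mu (pi0 / (cb + L) ^+ 2)
  _ _ lam_ge0 mu_ge0 _ _ _ (lam_opt mu mu_ge0 mu_sum)).
- by move=> k; rewrite ptarget_ge0 // (ltW pi0_gt0) (ltW pi0_lt1).
- by move=> k; rewrite p_neq0 => /uE ->.
- by rewrite lam_sum mu_sum.
- move=> k; rewrite /p /ptarget /mu; case: ifP => kP; first by rewrite uE ?inHS.
  case: ifP => kG; last by rewrite mul0r divr_ge0 ?sqr_ge0 ?ltW.
  rewrite uE ?addr0 ?neighbour_gain_le_target_gain ?pi0_gt0 //.
  by rewrite /HS in_setU kG orbT.
- move=> k; rewrite /mu /p /ptarget; case: ifP => kP; last by rewrite eqxx.
  by rewrite uE ?inHS.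
Qed.

End Allocation.

Lemma sum_ffun_prod_at (R : comPzRingType) (T : finType) (F : T -> T -> R)
    (h : T -> R) (s : T) :
  \sum_(m : {ffun T -> T}) (\prod_s' F s' (m s')) * h (m s) =
  (\sum_j F s j * h j) * \prod_(s' | s' != s) \sum_j F s' j.
Proof.
pose G s' j := if s' == s then F s' j * h j else F s' j.
transitivity (\sum_(m : {ffun T -> T}) \prod_s' G s' (m s')).
  apply: eq_bigr => m _; rewrite (bigD1 s) //= [in RHS](bigD1 s) //= /G eqxx.
  by rewrite mulrAC; congr (_ * _); apply: eq_bigr => s' /negbTE ->.
rewrite -bigA_distr_bigA (bigD1 s) //= /G eqxx; congr (_ * _).
by apply: eq_bigr => s' /negbTE ->.
Qed.

Section Moves.
Context {R : rcfType} {T : finType} {Gn : T -> {set T}} {gsz : nat} { pi0 : R }.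
Hypotheses (gsz_gt0 : (0 < gsz)%N) (cardG : forall j, #|Gn j| = gsz)
  (notinG : forall j, j \notin Gn j).

Lemma trans_ge0 s j : 0 <= pi0 <= 1 -> 0 <= trans Gn pi0 gsz s j.
Proof.
case/andP=> pi0_ge0 pi0_le1; rewrite /trans.
by case: ifP => // _; case: ifP => // _; rewrite divr_ge0 ?subr_ge0.
Qed.

Lemma moveProb_ge0 Psi m : 0 <= pi0 <= 1 -> 0 <= moveProb Gn pi0 gsz Psi m.
Proof.
move=> pi0_01; apply: prodr_ge0 => s _.
by case: ifP => _; rewrite ?trans_ge0 ?ler0n.
Qed.

Lemma sum_trans_mul s (h : T -> R) :
  \sum_j trans Gn pi0 gsz s j * h j
  = pi0 * h s + (1 - pi0) / gsz%:R * \sum_(j in Gn s) h j.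
Proof.
rewrite (bigD1 s) //= /trans eqxx mulr_sumr; congr (_ + _).
rewrite (bigID (mem (Gn s))) /= [X in _ + X]big1 ?addr0; last first.
  by move=> j /andP [/negbTE -> /negbTE ->]; rewrite mul0r.
apply: eq_big => [j | j /andP [/negbTE -> ->] //].
by case: (eqVneq j s) => [->|]; rewrite ?(negbTE (notinG s)).
Qed.

Lemma sum_trans s : \sum_j trans Gn pi0 gsz s j = 1.
Proof.
rewrite -(eq_bigr _ (fun j _ => mulr1 _)) sum_trans_mul sumr_const cardG mulr1.
by rewrite mulfVK ?pnatr_eq0 -?lt0n // subrKC.
Qed.

Lemma sum_moveProb_at (Psi : {set T}) (s : T) (h : T -> R) : s \in Psi ->
  \sum_m moveProb Gn pi0 gsz Psi m * h (m s)
  = pi0 * h s + (1 - pi0) / gsz%:R * \sum_(j in Gn s) h j.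
Proof.
move=> sPsi; rewrite /moveProb.
rewrite (@sum_ffun_prod_at _ _ (fun s' j => if s' \in Psi then trans Gn pi0 gsz s' j
  else (j == s')%:R)) /= sPsi sum_trans_mul.
rewrite [X in _ * X]big1 ?mulr1 // => s' _; case: (s' \in Psi); first exact: sum_trans.
by rewrite (bigD1 s') //= eqxx big1 ?addr0 // => j /negbTE ->.
Qed.

Lemma expected_next_precision (Psi : {set T}) (s : T) (pw A L : R)
    (c lam : T -> R) (y : {ffun T -> T} -> R) :
  0 <= pi0 <= 1 -> s \in Psi -> 0 <= pw -> 0 < A ->
  (forall j, 0 < c j) -> (forall j, 0 <= lam j) ->
  lam s = L -> (forall j, j \in Gn s -> lam j = 0) ->
  (forall m, 0 < pw * moveProb Gn pi0 gsz Psi m ->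
     (y m)^-1 = (c (m s) + lam (m s))^-1 + A^-1) ->
  \sum_m pw * moveProb Gn pi0 gsz Psi m * y m
  = pw * (pi0 * precision_step A (c s + L)
          + (1 - pi0) / gsz%:R * \sum_(j in Gn s) precision_step A (c j)).
Proof.
move=> pi0_01 sPsi pw_ge0 A_gt0 c_gt0 lam_ge0 lam_s lam_nbr yE.
pose f j := precision_step A (c j + lam j).
rewrite (@weighted_sum_eq_on_support _ _ _ _ (fun m : {ffun T -> T} => f (m s))).
- rewrite (eq_bigr _ (fun m _ => esym (mulrA _ _ _))) -mulr_sumr sum_moveProb_at //.
  rewrite /f lam_s; congr (_ * (_ + _ * _)).
  by apply: eq_bigr => j /lam_nbr ->; rewrite addr0.
- by move=> m; rewrite mulr_ge0 ?moveProb_ge0.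
- by move=> m /yE; apply: precision_stepE; rewrite // ltr_wpDr.
Qed.

End Moves.

Lemma neighbour_notin_Psi {T : finType} {Gn : T -> {set T}} {K : nat}
    {pos : 'I_K -> T} {n j} :
  (forall j, j \notin Gn j) ->
  (forall n n', n != n' -> [disjoint Hset Gn (pos n) & Hset Gn (pos n')]) ->
  j \in Gn (pos n) -> j \notin Psi_of pos.
Proof.
move=> notinG disjH jG; apply/imsetP => -[n' _ jE].
have [n'n|n'_neq_n] := eqVneq n' n.
  by move: jG; rewrite jE n'n (negbTE (notinG _)).
by have := disjointFr (disjH n' n n'_neq_n) (setU11 _ _); rewrite -jE setU1r.
Qed.

Lemma semi_omniscient_allocation_at {R : rcfType} {T : finType} {Gn : T -> {set T}}
    {gsz K : nat} {pos : 'I_K -> T} {u lam : T -> R} { pi0 Lam cb : R } (n : 'I_K) :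
  (0 < gsz)%N -> (0 < K)%N -> (forall j, j \notin Gn j) -> injective pos ->
  (forall n n', n != n' -> [disjoint Hset Gn (pos n) & Hset Gn (pos n')]) ->
  pi0 < 1 -> (1 - pi0) / gsz%:R <= pi0 -> 0 <= Lam ->
  (forall i, i \in HS Gn (Psi_of pos) -> u i = cb) ->
  (forall i, 0 <= lam i) /\ \sum_i lam i = Lam /\
    (forall mu : T -> R, (forall i, 0 <= mu i) -> \sum_i mu i = Lam ->
       objective (ptarget Gn pi0 gsz (Psi_of pos)) u lam
       <= objective (ptarget Gn pi0 gsz (Psi_of pos)) u mu) ->
  0 < eG pi0 gsz -> ccrit Lam K pi0 gsz <= cb ->
  lam (pos n) = Lam / K%:R /\ forall j, j \in Gn (pos n) -> lam j = 0.
Proof.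
move=> gsz_gt0 K_gt0 notinG pos_inj disjH pi0_lt1 q_le_pi0 Lam_ge0 uE
  [lam_ge0 [lam_sum lam_opt]] eG_gt0 crit_le_cb.
have cardPsi : #|Psi_of pos| = K by rewrite /Psi_of card_imset ?card_ord.
have lamE := semi_omniscient_allocation (Psi_of pos) u gsz_gt0 K_gt0 pi0_lt1
  q_le_pi0 Lam_ge0 cardPsi uE lam_ge0 lam_sum lam_opt eG_gt0 crit_le_cb.
have target_in : pos n \in Psi_of pos by apply: imset_f.
split=> [|j jG].
  by rewrite lamE ?(ifT _ _ target_in) // /HS in_setU target_in.
rewrite lamE ?(ifF _ _ (negbTE (neighbour_notin_Psi notinG disjH jG))) //.
by rewrite /HS in_setU; apply/orP; right; apply/bigcupP; exists (pos n).
Qed.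

Lemma sumr_weighted_combination (R : comNzRingType) (I : finType) (P X Y : I -> R)
    (a b : R) :
  \sum_i P i * (a * X i + b * Y i) = a * \sum_i P i * X i + b * \sum_i P i * Y i.
Proof. by rewrite !mulr_sumr -big_split /=; apply: eq_bigr => i _; ring. Qed.

Lemma expect_sum_over_set_le {R : numDomainType} {I T : finType} {g : nat}
    (P : I -> R) (S : I -> {set T}) (F : I -> T -> R) (B : R) (x0 : I -> T) :
  (forall i, 0 <= P i) -> (forall i, #|S i| = g) ->
  (forall sel : I -> T, (forall i, sel i \in S i) -> \sum_i P i * F i (sel i) <= B) ->
  \sum_i P i * \sum_(j in S i) F i j <= g%:R * B.
Proof.
move=> P_ge0 cardS sum_le.
pose sel k i := nth (x0 i) (enum (S i)) k.
have sel_in (k : 'I_g) i : sel k i \in S i by rewrite -mem_enum mem_nth // -cardE cardS.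
have -> : \sum_i P i * \sum_(j in S i) F i j = \sum_(k < g) \sum_i P i * F i (sel k i).
  rewrite exchange_big; apply: eq_bigr => i _.
  by rewrite -mulr_sumr -big_enum (big_nth (x0 i)) -cardE cardS big_mkord.
apply: le_trans (ler_sum _ (fun k _ => sum_le _ (sel_in k))) _.
by rewrite sumr_const card_ord mulr_natl.
Qed.

Lemma cbar_nextE (R : rcfType) (sigma2 Delta2 pi0 Lam : R) (K : nat) (cb : R) :
  cbar_next sigma2 Delta2 pi0 Lam K cb
  = pi0 * precision_step (sigma2 / Delta2) (cb + Lam / K%:R)
    + (1 - pi0) * precision_step (sigma2 / Delta2) cb.
Proof. by rewrite /cbar_next /precision_step !mulrA !addrA. Qed.

Theorem lemma2 (R : rcfType) (T : finType) (Gn : T -> {set T}) (gsz K : nat)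
    (Om0 : finType) (P0 : Om0 -> R) (pos : Om0 -> 'I_K -> T)
    (c cU lam : Om0 -> T -> R) (c' : Om0 -> {ffun T -> T} -> T -> R)
    (pi0 sigma2 Delta2 Lam cb : R) :
  (0 < gsz)%N -> (forall j, #|Gn j| = gsz) -> (forall j, j \notin Gn j) ->
  (0 < K)%N ->
  0 < sigma2 -> 0 < Delta2 -> pi0 < 1 -> (1 - pi0) / gsz%:R <= pi0 -> 0 <= Lam ->
  (* Om0 : history up to stage t, conditioned on |Psi(1)| = K *)
  (forall w, 0 <= P0 w) -> \sum_w P0 w = 1 ->
  (forall w, injective (pos w)) ->
  (forall w n n', n != n' -> [disjoint Hset Gn (pos w n) & Hset Gn (pos w n')]) ->
  (forall w i, 0 < c w i) ->
  (* hypothesis (U) *)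
  (forall w i, i \in HS Gn (Psi_of (pos w)) -> cU w i = cb) ->
  (* semi-omniscient allocation *)
  (forall w, (forall i, 0 <= lam w i) /\ \sum_i lam w i = Lam /\
     (forall mu : T -> R, (forall i, 0 <= mu i) -> \sum_i mu i = Lam ->
        objective (ptarget Gn pi0 gsz (Psi_of (pos w))) (cU w) (lam w)
        <= objective (ptarget Gn pi0 gsz (Psi_of (pos w))) (cU w) mu)) ->
  (* disjoint neighbourhoods at stage t *)
  (forall w m, 0 < P0 w * moveProb Gn pi0 gsz (Psi_of (pos w)) m ->
     forall n n', n != n' ->
       [disjoint Hset Gn (m (pos w n)) & Hset Gn (m (pos w n'))]) ->
  (* precision update *)
  (forall w m, 0 < P0 w * moveProb Gn pi0 gsz (Psi_of (pos w)) m ->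
     forall n i, i \in Hset Gn (m (pos w n)) ->
       (c' w m i)^-1 = (c w (m (pos w n)) + lam w (m (pos w n)))^-1 + Delta2 / sigma2) ->
  (* E[c_i(t) | |Psi(1)|] <= cbar(t) for i in H(Psi(t-1)) *)
  (forall n (sel : Om0 -> T), (forall w, sel w \in Hset Gn (pos w n)) ->
     \sum_w P0 w * c w (sel w) <= cb) ->
  (* cbar(t) >= c_crit (c_crit finite) *)
  0 < eG pi0 gsz -> ccrit Lam K pi0 gsz <= cb ->
  forall n (sel : Om0 -> {ffun T -> T} -> T),
    (forall w m, sel w m \in Hset Gn (m (pos w n))) ->
    \sum_w \sum_m P0 w * moveProb Gn pi0 gsz (Psi_of (pos w)) m * c' w m (sel w m)
      <= cbar_next sigma2 Delta2 pi0 Lam K cb.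
Proof.
move=> gsz_gt0 cardG notinG K_gt0 sigma2_gt0 Delta2_gt0 pi0_lt1 q_le_pi0 Lam_ge0
  P0_ge0 P0_sum1 pos_inj disjH c_gt0 HU Hopt _ Hupd Hexp eG_gt0 crit_le_cb n sel Hsel.
set A := sigma2 / Delta2; set L := Lam / K%:R; set q := (1 - pi0) / gsz%:R.
have A_gt0 : 0 < A by rewrite divr_gt0.
have q_gt0 : 0 < q by rewrite divr_gt0 ?ltr0n ?subr_gt0.
have L_ge0 : 0 <= L by rewrite divr_ge0 ?ler0n.
have pi0_01 : 0 <= pi0 <= 1 by rewrite !ltW // (lt_le_trans q_gt0 q_le_pi0).
have cb_ge0 : 0 <= cb.
  by apply: le_trans crit_le_cb; rewrite /ccrit divr_ge0 // mulr_ge0 ?ler0n // ltW.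
have cond_next w :
    \sum_m P0 w * moveProb Gn pi0 gsz (Psi_of (pos w)) m * c' w m (sel w m)
    = P0 w * (pi0 * precision_step A (c w (pos w n) + L)
              + q * \sum_(j in Gn (pos w n)) precision_step A (c w j)).
  have [lam_target lam_neighbour] := semi_omniscient_allocation_at n gsz_gt0 K_gt0
    notinG (pos_inj w) (disjH w) pi0_lt1 q_le_pi0 Lam_ge0 (HU w) (Hopt w) eG_gt0 crit_le_cb.
  apply: (expected_next_precision gsz_gt0 cardG notinG _ _ _ _ _ _ _ _ pi0_01
    (imset_f _ isT) (P0_ge0 w) A_gt0 (c_gt0 w) (Hopt w).1 lam_target lam_neighbour).
  by move=> m /Hupd upd; rewrite /A invf_div (upd n) // Hsel.
have target_le : \sum_w P0 w * precision_step A (c w (pos w n) + L)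
    <= precision_step A (cb + L).
  apply: expect_precision_step_le => //; first exact: addr_ge0.
    by move=> w; apply: addr_ge0 (ltW (c_gt0 _ _)) L_ge0.
  rewrite (eq_bigr _ (fun w _ => mulrDr _ _ _)) big_split /= -mulr_suml P0_sum1.
  by rewrite mul1r lerD2r; apply: Hexp => w; apply: setU11.
have neighbours_le : \sum_w P0 w * \sum_(j in Gn (pos w n)) precision_step A (c w j)
    <= gsz%:R * precision_step A cb.
  apply: (expect_sum_over_set_le _ _ _ _ (fun w => pos w n)) => // sel' sel'_in.
  apply: expect_precision_step_le => //; first by move=> w; apply: ltW.
  by apply: Hexp => w; apply: setU1r.
rewrite (eq_bigr _ (fun w _ => cond_next w)) sumr_weighted_combination.
have [pi0_ge0 _] := andP pi0_01.
apply: le_trans (lerD (ler_wpM2l pi0_ge0 target_le)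
  (ler_wpM2l (ltW q_gt0) neighbours_le)) _.
by rewrite cbar_nextE -/A -/L [q * _]mulrA /q mulfVK // pnatr_eq0 -lt0n.
Qed.
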